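(* Consider the algorithm described in the context, and suppose it does not terminate finitely. If $k\in\mathbb{N}$ satisfies $$(1-\eta)\Delta q_k(s_k,\tau_k)\ge \tfrac12\Big(-\frac{\tau_k}{\alpha_k}+\tau_kL_g+L_J\Big)\|s_k\|_2^2,$$ then $k\in\mathcal S$, i.e., iteration $k$ is successful ($x_{k+1}=x_k+s_k$).
   Context: Problem: $\min_{x\in\mathbb{R}^n} f(x)+r(x)$ subject to $c(x)=0$, where $f:\mathbb{R}^n\to\mathbb{R}$ and $c:\mathbb{R}^n\to\mathbb{R}^m$ ($m\le n$) are continuously differentiable and $r:\mathbb{R}^n\to\mathbb{R}_{\ge 0}$ is convex. Write $g(x)=\nabla f(x)$, $J(x)=\nabla c(x)^T$, and $f_k=f(x_k)$, $g_k=g(x_k)$, $c_k=c(x_k)$, $J_k=J(x_k)$, $r_k=r(x_k)$. All norms are Euclidean. Merit function: $\Phi_\tau(x)=\tau(f(x)+r(x))+\|c(x)\|_2$. Algorithm: inputs $x_0$, $\alpha_0>0$, $\tau_{-1}>0$; constants $\kappa_v>0$, $\sigma_c,\epsilon_\tau,\xi,\eta\in(0,1)$, $\sigma_u\in(0,1/2]$, $\bar\sigma_u:=\sigma_u+\tfrac12$. For $k=0,1,\dots$: 1. If $J_k^Tc_k\ne0$, compute $v_k$ with $v_k\in\mathrm{Range}(J_k^T)$, $\|v_k\|_2\le\kappa_v\alpha_k\|J_k^Tc_k\|_2$, $\|c_k+J_kv_k\|_2\le\|c_k+J_kv_k^c\|_2$, where $v_k^c=-\beta_k^cJ_k^Tc_k$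 with $\beta_k^c$ minimizing $\tfrac12\|c_k-\beta J_kJ_k^Tc_k\|_2^2$ over $0\le\beta\le\kappa_v\alpha_k$. Otherwise set $v_k=0$, and if $c_k\ne0$ terminate. 2. Let $u_k$ be the unique minimizer of $g_k^Tu+\tfrac1{2\alpha_k}\|u\|_2^2+r(x_k+v_k+u)$ subject to $J_ku=0$; set $s_k=v_k+u_k$. If $s_k=0$, terminate. 3. Let $D_k:=g_k^Ts_k+\bar\sigma_u\|s_k\|_2^2/\alpha_k+r(x_k+s_k)-r_k$; $\tau_{k,\mathrm{trial}}=\infty$ if $D_k\le0$, else $\tau_{k,\mathrm{trial}}=(1-\sigma_c)(\|c_k\|_2-\|c_k+J_kv_k\|_2)/D_k$. Set $\tau_k=\tau_{k-1}$ if $\tau_{k-1}\le\tau_{k,\mathrm{trial}}$, else $\tau_k=\min\{(1-\epsilon_\tau)\tau_{k-1},\tau_{k,\mathrm{trial}}\}$. 4. With $\Delta q_k(s,\tau):=-\tau(g_k^Ts+\tfrac1{2\alpha_k}\|s\|_2^2+r(x_k+s)-r_k)+\|c_k\|_2-\|c_k+J_ks\|_2$: if $\Phi_{\tau_k}(x_k+s_k)\le\Phi_{\tau_k}(x_k)-\eta\Delta q_k(s_k,\tau_k)$ set $x_{k+1}=x_k+s_k$, $\alpha_{k+1}=\alpha_k$ (iteration $k$ is then called successful, and $\mathcal S$ denotes the set of successful iterations); else $x_{k+1}=x_k$, $\alpha_{k+1}=\xi\alpha_k$. Standing assumption: there is an open convex set $\mathcal X$ containing all iterates $x_k$ and trial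 points $x_k+s_k$ such that $f$ is bounded below on $\mathcal X$, $\nabla f$ is bounded on $\mathcal X$ and Lipschitz continuous on $\mathcal X$ with constant $L_g>0$, $c$ is bounded on $\mathcal X$, $J$ is bounded on $\mathcal X$ and Lipschitz continuous on $\mathcal X$ with constant $L_J>0$, and all subgradients of $r$ at points of $\mathcal X$ are uniformly bounded in norm. *)

From HB Require Import structures.
From mathcomp Require Import all_boot all_order all_algebra.
From mathcomp Require Import all_classical all_reals all_analysis.
Set Implicit Arguments. Unset Strict Implicit. Unset Printing Implicit Defensive.
Import Order.TTheory GRing.Theory Num.Theory.
Import numFieldNormedType.Exports.
Local Open Scope classical_set_scope.
Local Open Scope ring_scope.

Section Defs.
Variable R : realType.

Definition dot {n : nat} (u v : 'cV[R]_n) : R := \sum_(i < n) u i 0 * v i 0.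
Definition norm2 {n : nat} (v : 'cV[R]_n) : R := Num.sqrt (dot v v).

Definition convex_set {n : nat} (X : set 'cV[R]_n) : Prop :=
  forall x y (t : R), X x -> X y -> 0 <= t <= 1 -> X (t *: x + (1 - t) *: y).
Definition convex_fun {n : nat} (r : 'cV[R]_n -> R) : Prop :=
  forall x y (t : R), 0 <= t <= 1 ->
    r (t *: x + (1 - t) *: y) <= t * r x + (1 - t) * r y.

Definition is_subgrad {n : nat} (r : 'cV[R]_n -> R) (x z : 'cV[R]_n) : Prop :=
  forall y, r x + dot z (y - x) <= r y.

Definition C1_grad {n : nat} (f : 'cV[R]_n -> R) (g : 'cV[R]_n -> 'cV[R]_n) :=
  continuous g /\
  forall x, differentiable f x /\ forall h, 'd f x h = dot (g x) h.

Definition C1_jac {n m : nat} (c : 'cV[R]_n -> 'cV[R]_m)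
    (J : 'cV[R]_n -> 'M[R]_(m, n)) :=
  continuous J /\
  forall x, differentiable c x /\ forall h, 'd c x h = J x *m h.

Definition merit {n m : nat} (f : 'cV[R]_n -> R) (r : 'cV[R]_n -> R)
    (c : 'cV[R]_n -> 'cV[R]_m) (tau : R) (x : 'cV[R]_n) : R :=
  tau * (f x + r x) + norm2 (c x).

(* tau_{k-1}, with tau_{-1} = taum1 *)
Definition tau_prev (taum1 : R) (tau : nat -> R) (k : nat) : R :=
  if k is k'.+1 then tau k' else taum1.

Definition standing_assumption {n m : nat} (X : set 'cV[R]_n)
    (f : 'cV[R]_n -> R) (g : 'cV[R]_n -> 'cV[R]_n)
    (c : 'cV[R]_n -> 'cV[R]_m) (J : 'cV[R]_n -> 'M[R]_(m, n))
    (r : 'cV[R]_n -> R) (Lg LJ : R) : Prop :=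
  open X /\ convex_set X /\
  (exists lb, forall x, X x -> lb <= f x) /\
  (exists B, forall x, X x -> norm2 (g x) <= B) /\
  0 < Lg /\ (forall x y, X x -> X y -> norm2 (g x - g y) <= Lg * norm2 (x - y)) /\
  (exists B, forall x, X x -> norm2 (c x) <= B) /\
  (* ||J(x)||_2 (induced 2-norm) bounded on X, written out *)
  (exists B, forall x, X x -> forall h, norm2 (J x *m h) <= B * norm2 h) /\
  (* ||J(x) - J(y)||_2 <= LJ ||x - y||_2 (induced 2-norm), written out *)
  0 < LJ /\ (forall x y, X x -> X y -> forall h,
               norm2 ((J x - J y) *m h) <= LJ * norm2 (x - y) * norm2 h) /\
  (exists B, forall x z, X x -> is_subgrad r x z -> norm2 z <= B).

Definition Delta_q {n m : nat} (g : 'cV[R]_n) (cx : 'cV[R]_m) (Jx : 'M[R]_(m, n))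
    (r : 'cV[R]_n -> R) (x : 'cV[R]_n) (alpha tau : R) (s : 'cV[R]_n) : R :=
  - tau * (dot g s + (2 * alpha)^-1 * norm2 s ^+ 2 + r (x + s) - r x)
  + norm2 cx - norm2 (cx + Jx *m s).

(* The iterates (x, alpha, tau, v, u, s) are generated by the algorithm,
   which does not terminate finitely. *)
Definition algorithm_run {n m : nat}
    (f : 'cV[R]_n -> R) (g : 'cV[R]_n -> 'cV[R]_n)
    (c : 'cV[R]_n -> 'cV[R]_m) (J : 'cV[R]_n -> 'M[R]_(m, n))
    (r : 'cV[R]_n -> R)
    (kappa_v sigma_c eps_tau xi eta sigma_u taum1 : R)
    (x : nat -> 'cV[R]_n) (alpha tau : nat -> R)
    (v u s : nat -> 'cV[R]_n) : Prop :=
  forall k : nat,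
  let xk := x k in let gk := g xk in let ck := c xk in let Jk := J xk in
  let JTc := (Jk)^T *m ck in
  (* Step 1 (and no termination in Step 1) *)
  (JTc != 0 ->
     (exists w : 'cV[R]_m, v k = (Jk)^T *m w) /\
     norm2 (v k) <= kappa_v * alpha k * norm2 JTc /\
     exists beta : R,
       0 <= beta <= kappa_v * alpha k /\
       (forall b, 0 <= b <= kappa_v * alpha k ->
          2^-1 * norm2 (ck - beta *: (Jk *m JTc)) ^+ 2
          <= 2^-1 * norm2 (ck - b *: (Jk *m JTc)) ^+ 2) /\
       norm2 (ck + Jk *m v k) <= norm2 (ck + Jk *m (- beta *: JTc))) /\
  (JTc = 0 -> v k = 0 /\ ck = 0) /\
  (let obj := fun w : 'cV[R]_n =>
       dot gk w + (2 * alpha k)^-1 * norm2 w ^+ 2 + r (xk + v k + w) in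
   Jk *m u k = 0 /\
   (forall w, Jk *m w = 0 -> obj (u k) <= obj w) /\
   (forall w, Jk *m w = 0 -> (forall w', Jk *m w' = 0 -> obj w <= obj w') ->
      w = u k)) /\
  s k = v k + u k /\ s k != 0 /\
  (let Dk := dot gk (s k) + (sigma_u + 2^-1) * norm2 (s k) ^+ 2 / alpha k
             + r (xk + s k) - r xk in
   let tp := tau_prev taum1 tau k in
   if Dk <= 0 then tau k = tp
   else let ttrial := (1 - sigma_c) * (norm2 ck - norm2 (ck + Jk *m v k)) / Dk in
        tau k = if tp <= ttrial then tp else Num.min ((1 - eps_tau) * tp) ttrial) /\
  (if merit f r c (tau k) (xk + s k) <=
        merit f r c (tau k) xk - eta * Delta_q gk ck Jk r xk (alpha k) (tau k) (s k)
   then x k.+1 = xk + s k /\ alpha k.+1 = alpha k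
   else x k.+1 = xk /\ alpha k.+1 = xi * alpha k).

Definition successful {n m : nat}
    (f : 'cV[R]_n -> R) (g : 'cV[R]_n -> 'cV[R]_n)
    (c : 'cV[R]_n -> 'cV[R]_m) (J : 'cV[R]_n -> 'M[R]_(m, n))
    (r : 'cV[R]_n -> R) (eta : R)
    (x : nat -> 'cV[R]_n) (alpha tau : nat -> R) (s : nat -> 'cV[R]_n) (k : nat) : Prop :=
  merit f r c (tau k) (x k + s k) <=
    merit f r c (tau k) (x k)
    - eta * Delta_q (g (x k)) (c (x k)) (J (x k)) r (x k) (alpha k) (tau k) (s k).

End Defs.

From Pilot Require Import Defs.
From HB Require Import structures.
From mathcomp Require Import all_boot all_order all_algebra.
From mathcomp Require Import all_classical all_reals all_analysis.
From mathcomp Require Import ring lra.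
Set Implicit Arguments. Unset Strict Implicit. Unset Printing Implicit Defensive.
Import Order.TTheory GRing.Theory Num.Theory.
Import numFieldNormedType.Exports.
Local Open Scope classical_set_scope.
Local Open Scope ring_scope.

(* Lipschitz continuity of the gradient and of the Jacobian on the convex set
   containing x_k and x_k + s_k gives the descent bounds
     f(x + s) <= f(x) + g(x)^T s + Lg/2 |s|^2,
     |c(x + s)| <= |c(x) + J(x) s| + LJ/2 |s|^2.
   Since tau_k >= 0, combining them shows that the merit function decreases by
   at least Delta q_k - 1/2 (-tau_k/alpha_k + tau_k Lg + LJ) |s_k|^2, which the
   hypothesis bounds below by eta Delta q_k: this is exactly the acceptance
   test of Step 4. Finally tau_k >= 0 because the normal step never
   increases the linearized constraint violation, so every trial value of the
   merit parameter is positive. *)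

Section Dot.
Variables (R : realType) (n : nat).
Implicit Types u v w : 'cV[R]_n.

Lemma dotC u v : dot u v = dot v u.
Proof. by apply: eq_bigr => i _; rewrite mulrC. Qed.

Lemma dotDl u v w : dot (u + v) w = dot u w + dot v w.
Proof. by rewrite /dot -big_split; apply: eq_bigr => i _; rewrite !mxE mulrDl. Qed.

Lemma dotZl a u v : dot (a *: u) v = a * dot u v.
Proof. by rewrite /dot mulr_sumr; apply: eq_bigr => i _; rewrite !mxE mulrA. Qed.

Lemma dotBl u v w : dot (u - v) w = dot u w - dot v w.
Proof. by rewrite dotDl -scaleN1r dotZl mulN1r. Qed.

Lemma dotDr u v w : dot w (u + v) = dot w u + dot w v.
Proof. by rewrite dotC dotDl !(dotC w). Qed.

Lemma dotZr a u v : dot v (a *: u) = a * dot v u.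
Proof. by rewrite dotC dotZl dotC. Qed.

Lemma dotBr u v w : dot w (u - v) = dot w u - dot w v.
Proof. by rewrite dotC dotBl !(dotC w). Qed.

Lemma dot0l v : dot 0 v = 0.
Proof. by rewrite -(scale0r 0) dotZl mul0r. Qed.

Lemma dotvv_ge0 v : 0 <= dot v v.
Proof. by apply: sumr_ge0 => i _; rewrite -expr2 sqr_ge0. Qed.

Lemma dotvv_eq0 v : (dot v v == 0) = (v == 0).
Proof.
apply/idP/eqP => [|->]; last by rewrite dot0l.
rewrite psumr_eq0 => [/allP v0|i _]; last by rewrite -expr2 sqr_ge0.
apply/matrixP => i j; rewrite ord1 mxE.
by have /(_ (mem_index_enum i)) := v0 i; rewrite -expr2 sqrf_eq0 => /eqP.
Qed.

Lemma norm2_ge0 v : 0 <= norm2 v.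
Proof. exact: sqrtr_ge0. Qed.

Lemma norm2_sqr v : norm2 v ^+ 2 = dot v v.
Proof. by rewrite sqr_sqrtr // dotvv_ge0. Qed.

Lemma norm2_gt0 v : v != 0 -> 0 < norm2 v.
Proof. by move=> v0; rewrite sqrtr_gt0 lt_def dotvv_eq0 v0 dotvv_ge0. Qed.

Lemma norm2Z a v : norm2 (a *: v) = `|a| * norm2 v.
Proof. by rewrite /norm2 dotZl dotZr mulrA -expr2 sqrtrM ?sqr_ge0 // sqrtr_sqr. Qed.

Lemma dot_le_norm2 u v : dot u v <= norm2 u * norm2 v.
Proof.
have [->|u0] := eqVneq u 0; first by rewrite dot0l /norm2 dot0l sqrtr0 mul0r.
have [->|v0] := eqVneq v 0; first by rewrite dotC dot0l /norm2 dot0l sqrtr0 mulr0.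
have := dotvv_ge0 (norm2 v *: u - norm2 u *: v).
rewrite !dotBl !dotBr !dotZl !dotZr -!norm2_sqr (dotC v u).
have := mulr_gt0 (norm2_gt0 u0) (norm2_gt0 v0); nra.
Qed.

Lemma norm2_triangle u v : norm2 (u + v) <= norm2 u + norm2 v.
Proof.
rewrite -(ler_pXn2r (isT : (0 < 2)%N)) ?nnegrE ?addr_ge0 ?norm2_ge0 //.
rewrite norm2_sqr dotDl !dotDr (dotC v u) sqrrD -!norm2_sqr.
have := dot_le_norm2 u v; nra.
Qed.

End Dot.

Section SegmentRemainder.
Variables (R : realType) (n : nat).
Implicit Types x s : 'cV[R]_n.

Lemma is_derive_along_line (F : 'cV[R]_n -> R) x s t :
  differentiable F (x + t *: s) ->
  is_derive t 1 (fun a : R => F (x + a *: s)) ('d F (x + t *: s) s).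
Proof.
move=> dF.
have quotE : (fun h : R => h^-1 *: (((fun a => F (x + a *: s)) \o shift t) (h *: 1)
                                     - F (x + t *: s)))
           = (fun h => h^-1 *: ((F \o shift (x + t *: s)) (h *: s) - F (x + t *: s))).
  by apply/funext => h /=; rewrite [h *: 1]mulr1 scalerDl addrCA.
apply: DeriveDef; first by rewrite /derivable quotE; exact: diff_derivable.
by rewrite /derive quotE; exact: deriveE.
Qed.

(* First-order Taylor remainder on [x, x + s] when the directional derivative
   D y s drifts by at most K t at x + t s; the mean value theorem is applied to
   a -> F (x + a s) - a D x s - K a^2 / 2. *)
Lemma taylor1_segment_le (F : 'cV[R]_n -> R) (D : 'cV[R]_n -> 'cV[R]_n -> R)
    x s K :
  (forall y, differentiable F y /\ forall h, 'd F y h = D y h) ->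
  (forall t, 0 <= t <= 1 -> D (x + t *: s) s - D x s <= K * t) ->
  F (x + s) - F x - D x s <= K / 2.
Proof.
move=> dF drift.
pose phi := (fun a => F (x + a *: s)) - D x s *: (id : R -> R)
            - (K / 2) *: ((id : R -> R) ^+ 2).
pose dphi t := D (x + t *: s) s - D x s - K * t.
have phi_derive t : is_derive t (1 : R) phi (dphi t).
  have [dFt dFtE] := dF (x + t *: s).
  have := is_derive_along_line dFt; rewrite dFtE => dline.
  apply: is_derive_eq.
  by rewrite /dphi /= ![_%:A]mulr1 expr1 -[(K / 2) *: _]/(K / 2 * _) -mulrA mulKf // pnatr_eq0.
have [t t01 mvt] : exists2 t, t \in `]0, 1[%R & phi 1 - phi 0 = dphi t * (1 - 0).
  apply: MVT => //.
  by apply: derivable_within_continuous => a _; have [] := phi_derive a.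
have phiE a : phi a = F (x + a *: s) - D x s * a - K / 2 * (a * a) by [].
move: mvt; rewrite !phiE /dphi scale1r scale0r addr0 !mulr0 !mulr1 !subr0.
rewrite in_itv /= in t01; case/andP: t01 => t0 t1.
have := drift t; rewrite ltW //= ltW // => /(_ isT); lra.
Qed.

Lemma convex_set_segment (X : set 'cV[R]_n) x s t :
  Defs.convex_set X -> X x -> X (x + s) -> 0 <= t <= 1 -> X (x + t *: s).
Proof.
move=> cX Xx Xxs t01.
have -> : x + t *: s = t *: (x + s) + (1 - t) *: x.
  by apply/matrixP => i j; rewrite !mxE; ring.
exact: cX.
Qed.

End SegmentRemainder.

Section Descent.
Variables (R : realType) (n m : nat) (X : set 'cV[R]_n).
Hypothesis convX : Defs.convex_set X.
Variables (x s : 'cV[R]_n).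
Hypotheses (Xx : X x) (Xxs : X (x + s)).

Lemma segment_drift_le (D : 'cV[R]_n -> R) L :
  (forall y, X y -> D y - D x <= L * norm2 (y - x) * norm2 s) ->
  forall t, 0 <= t <= 1 -> D (x + t *: s) - D x <= L * norm2 s ^+ 2 * t.
Proof.
move=> DL t t01; apply: le_trans (DL _ (convex_set_segment convX Xx Xxs t01)) _.
rewrite addrAC subrr add0r norm2Z ger0_norm ?(andP t01).1 //.
by rewrite le_eqVlt; apply/orP; left; apply/eqP; ring.
Qed.

Lemma grad_lipschitz_descent (f : 'cV[R]_n -> R) g Lg :
  C1_grad f g ->
  (forall y z, X y -> X z -> norm2 (g y - g z) <= Lg * norm2 (y - z)) ->
  f (x + s) - f x - dot (g x) s <= Lg * norm2 s ^+ 2 / 2.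
Proof.
move=> [_ df] gL.
apply: (taylor1_segment_le (D := fun y h => dot (g y) h)) => [y|].
  by have [] := df y; split.
apply: (segment_drift_le (D := fun y => dot (g y) s)) => y Xy.
rewrite -dotBl; apply: le_trans (dot_le_norm2 _ _) _.
by rewrite ler_wpM2r ?norm2_ge0 ?gL.
Qed.

Lemma dot_linear_differentiable k (w z : 'cV[R]_k) :
  differentiable (dot w) z /\ 'd (dot w) z = dot w :> (_ -> _).
Proof.
have dotE : dot w = \sum_(i < k) (fun v : 'cV[R]_k => w i 0 * v i 0).
  by apply/funext => v; rewrite fct_sumE.
have ddot y : differentiable (dot w) y.
  rewrite dotE; apply: differentiable_sum => i.
  rewrite (_ : (fun v => _) = w i 0 *: (fun v : 'cV[R]_k => v i 0)) //.
  exact/differentiableZ/differentiable_coord.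
have dot_lin : linear (dot w : 'cV[R]_k -> R) by move=> a u v; rewrite dotDr dotZr.
pose L : {linear 'cV[R]_k -> R} :=
  HB.pack (dot w : 'cV[R]_k -> R) (GRing.isLinear.Build _ _ _ _ _ dot_lin).
split; first exact: ddot.
by rewrite (_ : dot w = L) //; apply: diff_lin => y; exact: differentiable_continuous (ddot y).
Qed.

(* The vector remainder w is bounded through the scalar function y -> w^T c(y),
   whose remainder is |w|^2. *)
Lemma jac_lipschitz_descent (c : 'cV[R]_n -> 'cV[R]_m) J LJ :
  C1_jac c J ->
  (forall y z, X y -> X z -> forall h,
     norm2 ((J y - J z) *m h) <= LJ * norm2 (y - z) * norm2 h) ->
  norm2 (c (x + s) - c x - J x *m s) <= LJ * norm2 s ^+ 2 / 2.
Proof.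
move=> [_ dc] JL; set w := c (x + s) - c x - J x *m s.
have [->|w0] := eqVneq w 0.
  rewrite {1}/norm2 dot0l sqrtr0 divr_ge0 // expr2 mulrA.
  by have := le_trans (norm2_ge0 _) (JL _ _ Xxs Xx s); rewrite addrAC subrr add0r.
have remainder : dot w (c (x + s)) - dot w (c x) - dot w (J x *m s)
                 <= LJ * norm2 w * norm2 s ^+ 2 / 2.
  apply: (taylor1_segment_le (F := dot w \o c) (D := fun y h => dot w (J y *m h))).
    move=> y; have [dd ddE] := dot_linear_differentiable w (c y).
    have [dcy dcyE] := dc y.
    split; first exact: differentiable_comp.
    by move=> h; rewrite (diff_comp dcy dd) /= ddE dcyE.
  apply: (segment_drift_le (D := fun y => dot w (J y *m s))) => y Xy.
  rewrite -dotBr -mulmxBl; apply: le_trans (dot_le_norm2 _ _) _.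
  apply: le_trans (ler_wpM2l (norm2_ge0 w) (JL _ _ Xy Xx s)) _.
  by rewrite !mulrA (mulrC (norm2 w)).
rewrite -!dotBr -/w -norm2_sqr in remainder.
rewrite -(ler_pM2r (norm2_gt0 w0)) -expr2; apply: le_trans remainder _.
by rewrite le_eqVlt; apply/orP; left; apply/eqP; ring.
Qed.

End Descent.

Section Algorithm.
Variables (R : realType) (n m : nat).
Variables (f : 'cV[R]_n -> R) (g : 'cV[R]_n -> 'cV[R]_n).
Variables (c : 'cV[R]_n -> 'cV[R]_m) (J : 'cV[R]_n -> 'M[R]_(m, n)).
Variable r : 'cV[R]_n -> R.
Variables (kappa_v sigma_c eps_tau xi eta sigma_u taum1 : R).
Variables (x : nat -> 'cV[R]_n) (alpha tau : nat -> R) (v u s : nat -> 'cV[R]_n).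
Hypothesis run : algorithm_run f g c J r kappa_v sigma_c eps_tau xi eta sigma_u
                   taum1 x alpha tau v u s.

(* The Cauchy step with beta = 0 is admissible, so the minimizing beta does at
   least as well as doing nothing. *)
Lemma cauchy_step_norm2_le (cx : 'cV[R]_m) (Jx : 'M[R]_(m, n)) beta B :
  0 <= B ->
  (forall b, 0 <= b <= B ->
     2^-1 * norm2 (cx - beta *: (Jx *m (Jx^T *m cx))) ^+ 2
     <= 2^-1 * norm2 (cx - b *: (Jx *m (Jx^T *m cx))) ^+ 2) ->
  norm2 (cx + Jx *m (- beta *: (Jx^T *m cx))) <= norm2 cx.
Proof.
move=> B0 /(_ 0); rewrite lexx B0 scale0r subr0 => /(_ isT).
rewrite ler_pM2l ?invr_gt0 ?ltr0n // ler_pXn2r ?nnegrE ?norm2_ge0 //.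
by rewrite -scalemxAr scaleNr.
Qed.

Lemma normal_step_norm2_le k :
  norm2 (c (x k) + J (x k) *m v k) <= norm2 (c (x k)).
Proof.
have [step1 [step1_stationary _]] := run k.
have [/step1_stationary[-> _]|JTc0] := eqVneq ((J (x k))^T *m c (x k)) 0.
  by rewrite mulmx0 addr0.
have [_ [_ [beta [/andP[beta0 betaB] [beta_min cauchy]]]]] := step1 JTc0.
exact: le_trans cauchy (cauchy_step_norm2_le (le_trans beta0 betaB) beta_min).
Qed.

Hypotheses (sigma_c_le1 : sigma_c <= 1) (eps_tau_le1 : eps_tau <= 1).
Hypothesis taum1_ge0 : 0 <= taum1.

Lemma tau_ge0 k : 0 <= tau k.
Proof.
have tau_prev_ge0 j : 0 <= tau_prev taum1 tau j -> 0 <= tau j.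
  have [_ [_ [_ [_ [_ [update _]]]]]] := run j; move: update => /=.
  case: ifPn => [_ -> //|]; rewrite -ltNge => Dpos.
  case: ifP => [_ -> //|_ -> tp0]; rewrite le_min mulr_ge0 ?subr_ge0 //=.
  by rewrite divr_ge0 ?(ltW Dpos) // mulr_ge0 ?subr_ge0 ?normal_step_norm2_le.
by elim: k => [|k IHk]; apply: tau_prev_ge0.
Qed.

Lemma successful_accepted k :
  successful f g c J r eta x alpha tau s k -> x k.+1 = x k + s k.
Proof.
have [_ [_ [_ [_ [_ [_ step4]]]]]] := run k.
by move: step4; rewrite /successful => /= + accept; rewrite accept => -[].
Qed.

End Algorithm.

Lemma merit_trial_le (R : realType) (n m : nat) (f : 'cV[R]_n -> R) g
    (c : 'cV[R]_n -> 'cV[R]_m) J r (x s : 'cV[R]_n) alpha tau Lg LJ :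
  0 <= tau ->
  f (x + s) - f x - dot (g x) s <= Lg * norm2 s ^+ 2 / 2 ->
  norm2 (c (x + s) - c x - J x *m s) <= LJ * norm2 s ^+ 2 / 2 ->
  merit f r c tau (x + s)
  <= merit f r c tau x - Delta_q (g x) (c x) (J x) r x alpha tau s
     + 2^-1 * (- tau / alpha + tau * Lg + LJ) * norm2 s ^+ 2.
Proof.
move=> tau0 f_descent c_descent.
have c_bound : norm2 (c (x + s)) <= norm2 (c x + J x *m s) + LJ * norm2 s ^+ 2 / 2.
  have -> : c (x + s) = (c x + J x *m s) + (c (x + s) - c x - J x *m s).
    by apply/matrixP => i j; rewrite !mxE; ring.
  by apply: le_trans (norm2_triangle _ _) _; rewrite lerD2l.
rewrite -subr_ge0.
have -> : merit f r c tau x - Delta_q (g x) (c x) (J x) r x alpha tau s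
          + 2^-1 * (- tau / alpha + tau * Lg + LJ) * norm2 s ^+ 2
          - merit f r c tau (x + s)
        = tau * (Lg * norm2 s ^+ 2 / 2 - (f (x + s) - f x - dot (g x) s))
          + (norm2 (c x + J x *m s) + LJ * norm2 s ^+ 2 / 2 - norm2 (c (x + s))).
  by rewrite /merit /Delta_q invfM; ring.
by rewrite addr_ge0 ?mulr_ge0 // subr_ge0.
Qed.

Theorem lemma3p5 (R : realType) (n m : nat) (Hmn : (m <= n)%N)
    (f : 'cV[R]_n -> R) (g : 'cV[R]_n -> 'cV[R]_n)
    (c : 'cV[R]_n -> 'cV[R]_m) (J : 'cV[R]_n -> 'M[R]_(m, n))
    (r : 'cV[R]_n -> R)
    (Hf : C1_grad f g) (Hc : C1_jac c J)
    (Hr0 : forall y, 0 <= r y) (Hrc : convex_fun r)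
    (kappa_v sigma_c eps_tau xi eta sigma_u taum1 : R)
    (Hkappa : 0 < kappa_v) (Hsc : 0 < sigma_c < 1) (Het : 0 < eps_tau < 1)
    (Hxi : 0 < xi < 1) (Heta : 0 < eta < 1) (Hsu : 0 < sigma_u <= 2^-1)
    (Htaum1 : 0 < taum1)
    (x : nat -> 'cV[R]_n) (alpha tau : nat -> R) (v u s : nat -> 'cV[R]_n)
    (Halpha0 : 0 < alpha 0)
    (Hrun : algorithm_run f g c J r kappa_v sigma_c eps_tau xi eta sigma_u taum1
              x alpha tau v u s)
    (X : set 'cV[R]_n) (Lg LJ : R)
    (HX : forall k, X (x k) /\ X (x k + s k))
    (Hstand : standing_assumption X f g c J r Lg LJ)
    (k : nat)
    (Hk : (1 - eta) * Delta_q (g (x k)) (c (x k)) (J (x k)) r (x k) (alpha k) (tau k) (s k)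
          >= 2^-1 * (- tau k / alpha k + tau k * Lg + LJ) * norm2 (s k) ^+ 2) :
  successful f g c J r eta x alpha tau s k /\ x k.+1 = x k + s k.
Proof.
have [Xx Xxs] := HX k.
have [_ [convX [_ [_ [_ [gL [_ [_ [_ [JL _]]]]]]]]]] := Hstand.
have tau_k_ge0 : 0 <= tau k.
  apply: (tau_ge0 Hrun); rewrite ?ltW //; [exact: (andP Hsc).2|exact: (andP Het).2].
have succ : successful f g c J r eta x alpha tau s k.
  have := merit_trial_le r (alpha k) tau_k_ge0
    (grad_lipschitz_descent convX Xx Xxs Hf gL)
    (jac_lipschitz_descent convX Xx Xxs Hc JL).
  rewrite /successful; lra.
by split; last exact: successful_accepted Hrun _ succ.
Qed.
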